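(* Let $q$ be a prime power and $n,t,m$ positive integers with $t\geq m$. Let $\ell$ be a positive integer such that $$ e \left[ {\ell \choose t} - { \ell-t \choose t} \right] \left(\frac{m}{q}\right)^{n} \leq 1,$$ where $e$ is Euler's number and ${\ell-t \choose t}$ is set to zero if $\ell < 2t$. Then $EGZ(t,\mathbb{F}_q^{n},m) > \ell$.
   Context: $\mathbb{F}_q^n$ is viewed as a commutative ring with coordinatewise operations. For elements $g_1,\dots,g_t$ of a commutative ring $R$, $e_m(g_1,\dots,g_t)=\sum_{1\leq i_1<\cdots<i_m\leq t}\prod_{j=1}^m g_{i_j}$. A sequence over $R$ is a finite list of elements of $R$ (repetitions allowed); a subsequence of length $t$ is obtained by choosing $t$ distinct positions. For a finite commutative ring $R$, $EGZ(t,R,m)$ is the smallest positive integer $\ell$ such that every sequence $S$ over $R$ of length $|S|\geq \ell$ contains a subsequence $S'$ of length $t$ with $e_m(S')=0$ in $R$; if no such $\ell$ exists, $EGZ(t,R,m)=\infty$. *)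

From HB Require Import structures.
From mathcomp Require Import all_boot all_order all_algebra.
Set Implicit Arguments. Unset Strict Implicit. Unset Printing Implicit Defensive.
Import GRing.Theory.
Local Open Scope ring_scope.

(* F_q^n as a commutative ring with coordinatewise operations:
   finite functions 'I_n -> F with the pointwise ring structure of ssralg. *)
Definition Fqn (F : finFieldType) (n : nat) := {ffun 'I_n -> F}.

Definition esym_at (R : pzSemiRingType) (m : nat) (S : seq R)
    (I : {set 'I_(size S)}) : R :=
  \sum_(J : {set 'I_(size S)} | (J \subset I) && (#|J| == m))
     \prod_(j in J) nth 0 S j.

Definition EGZ_holds (R : pzSemiRingType) (t m l : nat) : Prop :=
  forall S : seq R, (l <= size S)%N ->
    exists I : {set 'I_(size S)}, #|I| = t /\ esym_at m I = 0.

(* EGZ(t,R,m) > l  :<=>  no positive l' <= l has the EGZ property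
   (this also covers EGZ(t,R,m) = infinity). *)
Definition EGZ_gt (R : pzSemiRingType) (t m l : nat) : Prop :=
  forall l', (0 < l')%N -> (l' <= l)%N -> ~ EGZ_holds R t m l'.

(* Take the entries of a sequence of length l over F_q^n uniformly at random and
   let A_T be the event that the t-subsequence at positions T has e_m = 0.
   Since e_m is multilinear of degree m in the positions of T, coordinatewise
   Schwartz-Zippel bounds the probability of A_T by (m/q)^n, even conditioned on
   any event determined by the positions outside T.  So A_T is independent of the
   events A_T' with T' disjoint from T, and T meets d = C(l,t) - C(l-t,t) - 1
   other t-subsets.  The symmetric local lemma, with x = 1/(d+1) and
   (1 + 1/d)^d <= e, shows that with positive probability no A_T occurs; such
   a sequence refutes the EGZ property for every length l' <= l.
   Probabilities are counted as cardinalities throughout. *)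

From mathcomp Require Import all_boot all_order all_algebra.
From mathcomp Require Import zify.
Set Implicit Arguments. Unset Strict Implicit. Unset Printing Implicit Defensive.
Import GRing.Theory.

Section ElemSym.
Local Open Scope ring_scope.
Variables (R : pzSemiRingType) (L : nat).
Implicit Types (m : nat) (T : {set 'I_L}) (x y : 'I_L -> R).

Definition elem_sym m T x : R :=
  \sum_(J : {set 'I_L} | (J \subset T) && (#|J| == m)) \prod_(j in J) x j.

Lemma eq_elem_sym m T x y : {in T, x =1 y} -> elem_sym m T x = elem_sym m T y.
Proof.
move=> eq_xy; apply: eq_bigr => J /andP[/subsetP sJT _].
by apply: eq_bigr => j /sJT /eq_xy.
Qed.

Lemma elem_sym0 T x : elem_sym 0 T x = 1.
Proof.
rewrite /elem_sym (big_pred1 set0) ?big_set0 // => J /=.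
by rewrite cards_eq0 andb_idl // => /eqP ->; rewrite sub0set.
Qed.

End ElemSym.

Lemma elem_sym_ffunE (R : pzSemiRingType) (aT : finType) L m (T : {set 'I_L})
    (x : 'I_L -> {ffun aT -> R}) a :
  elem_sym m T x a = elem_sym m T (fun j => x j a).
Proof.
rewrite sum_ffunE; apply: eq_bigr => J _.
by elim/big_rec2: _ => [|j u v _ <-]; rewrite !ffunE.
Qed.

Lemma elem_sym_cast (R : pzSemiRingType) L L' (e : L = L') m (I : {set 'I_L})
    (x : 'I_L' -> R) :
  elem_sym m I (fun i => x (cast_ord e i)) = elem_sym m (cast_ord e @: I) x.
Proof.
case: L' / e x => x; rewrite (eq_imset _ (@cast_ord_id L _)) imset_id.
by apply: eq_elem_sym => i _; rewrite cast_ord_id.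
Qed.

Lemma elem_symS (R : comPzSemiRingType) L m (T : {set 'I_L}) (x : 'I_L -> R) j0 :
  j0 \in T ->
  elem_sym m.+1 T x = (x j0 * elem_sym m (T :\ j0) x + elem_sym m.+1 (T :\ j0) x)%R.
Proof.
move=> j0T; rewrite /elem_sym (bigID (fun J : {set 'I_L} => j0 \in J)) /=.
congr (_ + _)%R; last first.
  by apply: eq_bigl => J; rewrite subsetD1 -andbA [X in _ && X]andbC andbA.
rewrite mulr_sumr (reindex_onto (fun J => j0 |: J) (fun J => J :\ j0)) /=; last first.
  by move=> J /andP[_ j0J]; rewrite setD1K.
apply: eq_big => J; last first.
  by move=> /andP[_ /eqP <-]; rewrite big_setU1 // !inE eqxx.
have [j0J | j0J] := boolP (j0 \in J).
  rewrite (setUidPr _) ?sub1set // subsetD1 j0J andbF /=.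
  suff /negbTE -> : J :\ j0 != J by rewrite andbF.
  by apply/eqP => /setP/(_ j0); rewrite !inE eqxx j0J.
rewrite setU1K // eqxx setU11 !andbT subUset sub1set j0T cardsU1 j0J add1n eqSS.
by rewrite subsetD1 j0J andbT.
Qed.

Lemma EGZ_gt_of_elem_sym_neq0 (R : pzSemiRingType) t m l (x : 'I_l -> R) :
  (forall T : {set 'I_l}, #|T| = t -> elem_sym m T x != 0%R) -> EGZ_gt R t m l.
Proof.
move=> x_ok l' _ le_l'l /(_ [seq x i | i <- enum 'I_l]).
have size_S : size [seq x i | i <- enum 'I_l] = l by rewrite size_map size_enum_ord.
case=> [|I [card_I]]; first by rewrite size_S.
have -> : esym_at m I = elem_sym m I (fun i => x (cast_ord size_S i)).
  apply: eq_elem_sym => i _.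
  have lt_il : i < l by have := ltn_ord i; rewrite {2}size_S.
  rewrite (nth_map (cast_ord size_S i)) ?size_enum_ord //.
  by rewrite -[X in nth _ _ X]/(nat_of_ord (cast_ord size_S i)) nth_ord_enum.
have card_cast : #|cast_ord size_S @: I| = t.
  by rewrite card_imset ?card_I //; exact: cast_ord_inj.
by have := x_ok _ card_cast; rewrite -elem_sym_cast => /eqP neq0 /neq0.
Qed.

Lemma EGZ_gt_small (R : pzSemiRingType) t m l : l < t -> EGZ_gt R t m l.
Proof.
move=> lt_l_t; apply: (@EGZ_gt_of_elem_sym_neq0 R t m l (fun=> 0%R)) => T cardT.
by have := max_card T; rewrite card_ord cardT leqNgt lt_l_t.
Qed.

Section SchwartzZippel.
Variables (F : finFieldType) (n L : nat).
Local Notation Omega := {ffun 'I_L -> Fqn F n}.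
Implicit Types (P T : {set 'I_L}) (k : 'I_n) (K : {set 'I_n}).
Implicit Types (C A : {set Omega}) (w : Omega).

Definition agree_off P K w w' :=
  forall j k, ~~ ((j \in P) && (k \in K)) -> w j k = w' j k.

Definition determined_off P K C :=
  forall w w', agree_off P K w w' -> w \in C -> w' \in C.

Lemma determined_offS P P' K K' C : P' \subset P -> K' \subset K ->
  determined_off P K C -> determined_off P' K' C.
Proof.
move=> /subsetP sP /subsetP sK detC w w' agree_ww'; apply: detC => j k jk.
by apply: agree_ww'; apply: contra jk => /andP[/sP -> /sK ->].
Qed.

Lemma determined_offI P K C A :
  determined_off P K C -> determined_off P K A -> determined_off P K (C :&: A).
Proof.
move=> detC detA w w' agree_ww'; rewrite !inE => /andP[wC wA].
by rewrite (detC _ _ agree_ww' wC) (detA _ _ agree_ww' wA).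
Qed.

Definition set_entry j0 k0 w (y : F) : Omega :=
  [ffun j => if j == j0 then [ffun k => if k == k0 then y else w j k] else w j].

Lemma agree_off_set_entry j0 k0 w y : agree_off [set j0] [set k0] w (set_entry j0 k0 w y).
Proof.
by move=> j k; rewrite !inE !ffunE; case: eqP => // -> /=; rewrite ffunE; case: eqP.
Qed.

Lemma card_fiber_unique j0 k0 C A :
  determined_off [set j0] [set k0] C ->
  {in A &, forall w w', agree_off [set j0] [set k0] w w' -> w = w'} ->
  #|C :&: A| * #|F| <= #|C|.
Proof.
move=> detC uniqA; pose f (p : Omega * F) := set_entry j0 k0 p.1 p.2.
have f_inj : {in setX (C :&: A) [set: F] &, injective f}.
  move=> [w y] [w' y'] /setXP[/setIP[_ wA] _] /setXP[/setIP[_ w'A] _] /= eq_f.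
  have eq_y : y = y'.
    have := congr1 (fun u : Omega => u j0 k0) eq_f.
    by rewrite !ffunE !eqxx !ffunE !eqxx.
  rewrite /f /= -eq_y in eq_f *; congr (_, _); apply: uniqA => // j k jk.
  by rewrite (agree_off_set_entry w y jk) (agree_off_set_entry w' y jk) eq_f.
rewrite -[#|F|]cardsT -cardsX -(card_in_imset f_inj); apply/subset_leq_card/subsetP.
move=> _ /imsetP[[w y] /setXP[/setIP[wC _] _] ->].
exact: detC (agree_off_set_entry w y) wC.
Qed.

Definition zero_coord m T k : {set Omega} :=
  [set w : Omega | elem_sym m T (fun j => w j k) == 0%R].

Lemma determined_off_zero_coord m T k P K :
  k \notin K -> determined_off P K (zero_coord m T k).
Proof.
move=> kK w w' agree_ww'; rewrite !inE (@eq_elem_sym _ _ _ _ _ (fun j => w' j k)) //.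
by move=> j _; apply: agree_ww'; rewrite (negbTE kK) andbF.
Qed.

Lemma determined_off_bigcap (I : finType) (B : {pred I}) (A : I -> {set Omega}) P K :
  (forall i, B i -> determined_off P K (A i)) ->
  determined_off P K (\bigcap_(i | B i) A i).
Proof.
move=> detA; elim/big_ind: _ => //; last exact: determined_offI.
by move=> w w' _; rewrite !inE.
Qed.

Lemma card_elem_sym_coord_eq0 k m T C : m <= #|T| -> determined_off T [set k] C ->
  #|C :&: zero_coord m T k| * #|F| <= m * #|C|.
Proof.
elim: m T C => [|m IHm] T C le_mT detC.
  rewrite (_ : _ :&: _ = set0) ?cards0 //.
  by apply/setP => w; rewrite !inE elem_sym0 oner_eq0 andbF.
have /card_gt0P[j0 j0T] : 0 < #|T| by apply: leq_trans le_mT.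
pose T' := T :\ j0; pose Z := zero_coord m.+1 T k; pose Z' := zero_coord m T' k.
have le_mT' : m <= #|T'| by move: le_mT; rewrite (cardsD1 j0 T) j0T.
rewrite -(cardsID Z' (C :&: Z)) mulnDl mulSn addnC leq_add //; last first.
  apply: leq_trans (IHm T' C le_mT' _); last first.
    by apply: determined_offS detC; rewrite ?subD1set.
  by rewrite leq_mul2r subset_leq_card ?orbT ?setSI ?subsetIl.
(* Off [Z'], e_(m+1) is affine in the entry (j0, k) with a nonzero slope. *)
rewrite -setIDA; apply: (card_fiber_unique (j0 := j0) (k0 := k)).
  by apply: determined_offS detC; rewrite sub1set ?set11.
move=> w w'; rewrite !inE => /andP[Z'w Zw] /andP[Z'w' Zw'] agree_ww'.
have eq_T' p : elem_sym p T' (fun j => w j k) = elem_sym p T' (fun j => w' j k).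
  apply: eq_elem_sym => j; rewrite !inE => /andP[ne_jj0 _].
  by apply: agree_ww'; rewrite !inE (negbTE ne_jj0).
move: Zw Zw'; rewrite !(elem_symS _ _ j0T) !eq_T' => /eqP Zw /eqP Zw'.
have eq_j0 : w j0 k = w' j0 k.
  apply: (mulIf Z'w'); apply: (addIr (elem_sym m.+1 T' (fun j => w' j k))).
  by rewrite Zw Zw'.
apply/ffunP => j; apply/ffunP => k'.
have [/andP[/eqP -> /eqP ->] //|ne] := boolP ((j == j0) && (k' == k)).
by apply: agree_ww'; rewrite !inE.
Qed.

Lemma card_elem_sym_coords_eq0 m T K C : m <= #|T| -> determined_off T K C ->
  #|C :&: \bigcap_(k in K) zero_coord m T k| * #|F| ^ #|K| <= m ^ #|K| * #|C|.
Proof.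
move=> le_mT; move cardK: #|K| => c; elim: c K cardK C => [|c IHc] K cardK C detC.
  by rewrite !expn0 muln1 mul1n subset_leq_card ?subsetIl.
have /card_gt0P[k0 k0K] : 0 < #|K| by rewrite cardK.
have cardK' : #|K :\ k0| = c by move: cardK; rewrite (cardsD1 k0 K) k0K => -[].
pose C' := C :&: \bigcap_(k in K :\ k0) zero_coord m T k.
have detC' : determined_off T [set k0] C'.
  apply: determined_offI; first by apply: determined_offS detC; rewrite ?sub1set.
  apply: determined_off_bigcap => k /setD1P[ne_kk0 _].
  by apply: determined_off_zero_coord; rewrite inE.
rewrite (big_setD1 k0 k0K) /= setIA setIAC -/C' expnS mulnA.
apply: leq_trans (_ : m * #|C'| * #|F| ^ c <= _).
  by rewrite leq_mul2r card_elem_sym_coord_eq0 ?orbT.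
rewrite expnS -!mulnA leq_mul2l (IHc (K :\ k0)) ?orbT //.
by apply: determined_offS detC; rewrite ?subD1set.
Qed.

Lemma card_elem_sym_eq0 m T C : m <= #|T| -> determined_off T setT C ->
  #|C :&: [set w : Omega | elem_sym m T w == 0%R]| * #|F| ^ n <= m ^ n * #|C|.
Proof.
move=> le_mT detC.
have -> : [set w : Omega | elem_sym m T w == 0%R] = \bigcap_(k in setT) zero_coord m T k.
  apply/setP => w; rewrite inE; apply/eqP/bigcapP => [w0 k _ | w0].
    by rewrite inE -elem_sym_ffunE w0 ffunE.
  apply/ffunP => k; rewrite elem_sym_ffunE ffunE; apply/eqP.
  by have := w0 k (in_setT k); rewrite inE.
by have := card_elem_sym_coords_eq0 le_mT detC; rewrite cardsT card_ord.
Qed.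

End SchwartzZippel.

Section LopsidedLocalLemma.
Variables (Omega I : finType) (bad : I -> {set Omega}) (nbr : I -> {set I}).
Implicit Types (S U : {set I}) (i j : I).

Definition avoid S : {set Omega} := [set w | [forall i in S, w \notin bad i]].

Lemma avoid0 : avoid set0 = setT.
Proof. by apply/setP => w; rewrite !inE; apply/forall_inP => i; rewrite inE. Qed.

Lemma avoidS S S' : S \subset S' -> avoid S' \subset avoid S.
Proof.
move=> /subsetP sSS'; apply/subsetP => w; rewrite !inE => /forall_inP S'w.
by apply/forall_inP => i /sSS' /S'w.
Qed.

Lemma avoidU1 j S : avoid (j |: S) = avoid S :\: bad j.
Proof.
apply/setP => w; rewrite !inE; apply/forall_inP/andP => [jSw | [jw /forall_inP Sw] i].
  split; first by apply: jSw; rewrite !inE eqxx.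
  by apply/forall_inP => i iS; apply: jSw; rewrite !inE iS orbT.
by rewrite !inE => /predU1P[-> // | /Sw].
Qed.

Variables (a b : nat).

Lemma card_avoidU1 j S : #|bad j :&: avoid S| * b <= a * #|avoid S| ->
  #|avoid S| * (b - a) <= #|avoid (j |: S)| * b.
Proof.
rewrite avoidU1 -(cardsID (bad j) (avoid S)) [bad j :&: _]setIC.
move: #|_ :&: _| #|_ :\: _| => Y M le_Yb_aN.
by rewrite mulnBr leq_subLR mulnDl leq_add2r [_ * a]mulnC.
Qed.

Lemma card_avoid_telescope S U :
  (forall U' j, U' \subset U -> j \in U -> j \notin U' ->
     #|bad j :&: avoid (S :|: U')| * b <= a * #|avoid (S :|: U')|) ->
  #|avoid S| * (b - a) ^ #|U| <= #|avoid (S :|: U)| * b ^ #|U|.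
Proof.
move cardU: #|U| => c; elim: c U cardU => [|c IHc] U cardU step.
  by move/eqP: cardU; rewrite cards_eq0 => /eqP->; rewrite setU0.
have /card_gt0P[j jU] : 0 < #|U| by rewrite cardU.
have cardU' : #|U :\ j| = c by move: cardU; rewrite (cardsD1 j U) jU => -[].
have IH := IHc _ cardU' (fun U' j' sU' j'U' =>
  step U' j' (subset_trans sU' (subD1set U j)) (subsetP (subD1set U j) _ j'U')).
have := card_avoidU1 (step _ _ (subD1set U j) jU (negbT (setD11 j U))).
rewrite setUCA setD1K // !expnS => last_step.
apply: leq_trans (_ : #|avoid (S :|: U :\ j)| * b ^ c * (b - a) <= _).
  by rewrite [(b - a) * _]mulnC mulnA leq_mul2r IH orbT.
by rewrite mulnAC mulnA leq_mul2r last_step orbT.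
Qed.

Variables (P Q d : nat).
Hypothesis bad_bound :
  forall i S, [disjoint S & nbr i] -> #|bad i :&: avoid S| * Q <= P * #|avoid S|.
Hypothesis card_nbr : forall i, #|nbr i :\ i| <= d.
Hypotheses (Q_gt0 : 0 < Q) (a_lt_b : a < b).
(* With p = P/Q and x = a/b this is the local lemma condition p <= x (1 - x)^d. *)
Hypothesis lll_cond : P * b ^ d.+1 <= Q * a * (b - a) ^ d.

Lemma card_bad_avoid i S : i \notin S -> #|bad i :&: avoid S| * b <= a * #|avoid S|.
Proof.
have [c] := ubnP #|S|; elim: c S i => // c IHc S i /ltnSE le_Sc iS.
pose S1 := S :&: nbr i; pose S2 := S :\: nbr i.
have S21 : S2 :|: S1 = S by rewrite setUC setID.
have tele : #|avoid S2| * (b - a) ^ #|S1| <= #|avoid S| * b ^ #|S1|.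
  rewrite -[in avoid S]S21; apply: card_avoid_telescope => U' j sU'S1 jS1 jU'.
  have /setIP[jS j_nbr] := jS1.
  have sub : S2 :|: U' \subset S :\ j.
    apply/subsetP => k /setUP[/setDP[kS k_nbr] | kU']; rewrite !inE.
      by rewrite kS andbT; apply: contraNneq k_nbr => ->.
    have /setIP[kS _] := subsetP sU'S1 _ kU'.
    by rewrite kS andbT; apply: contraNneq jU' => <-.
  apply: IHc; last by rewrite !inE negb_or j_nbr jU'.
  by apply: leq_ltn_trans (subset_leq_card sub) _; rewrite (cardsD1 j S) jS in le_Sc.
have le_S1d : #|S1| <= d.
  apply: leq_trans (card_nbr i); apply/subset_leq_card/subsetP => k /setIP[kS k_nbr].
  by rewrite !inE k_nbr andbT; apply: contraNneq iS => <-.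
have tele_d : #|avoid S2| * (b - a) ^ d <= #|avoid S| * b ^ d.
  rewrite -(subnKC le_S1d) !expnD !mulnA leq_mul //.
  by case: (d - #|S1|) => [|e]; rewrite ?expn0 // leq_exp2r // leq_subr.
have /subsetDP[_ S2_nbr] : S2 \subset S :\: nbr i := subxx _.
have bound_S2 := bad_bound S2_nbr.
have le_bad : #|bad i :&: avoid S| <= #|bad i :&: avoid S2|.
  by apply/subset_leq_card/setIS/avoidS/subsetDl.
rewrite -(@leq_pmul2r (Q * (b - a) ^ d)); last first.
  by rewrite muln_gt0 Q_gt0 expn_gt0 subn_gt0 a_lt_b.
move: lll_cond tele_d bound_S2 le_bad; rewrite expnS.
move: #|_ :&: avoid S| #|_ :&: avoid S2| #|avoid S| #|avoid S2| ((b - a) ^ d) (b ^ d).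
move=> X Y N N2 A B cond le_N2 le_YQ le_XY.
(* X b Q A <= P N2 b A <= P b N B = P b^(d+1) N <= Q a A N *)
have := leq_mul (leq_trans (leq_mul le_XY (leqnn Q)) le_YQ) (leqnn (b * A)).
have := leq_mul (leqnn (P * b)) le_N2.
have := leq_mul cond (leqnn N).
nia.
Qed.

Theorem lopsided_local_lemma : 0 < #|Omega| -> exists w, forall i, w \notin bad i.
Proof.
move=> Omega_gt0.
have step U' j :
    j \notin U' -> #|bad j :&: avoid (set0 :|: U')| * b <= a * #|avoid (set0 :|: U')|.
  by rewrite set0U; apply: card_bad_avoid.
have := @card_avoid_telescope set0 setT (fun U' j _ _ => step U' j).
rewrite set0U avoid0 cardsT => tele.
have /card_gt0P[w] : 0 < #|avoid setT|.
  rewrite lt0n; apply: contraTneq tele => ->.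
  by rewrite mul0n -ltnNge muln_gt0 Omega_gt0 expn_gt0 subn_gt0 a_lt_b.
by rewrite inE => /forall_inP avoid_w; exists w => i; apply: avoid_w; rewrite inE.
Qed.

End LopsidedLocalLemma.

Lemma card_meeting_sets l t (T : {set 'I_l}) : #|T| = t ->
  #|[set T' : {set 'I_l} | (#|T'| == t) && ~~ [disjoint T' & T]]|
    = 'C(l, t) - 'C(l - t, t).
Proof.
move=> cardT; have := cardsID [set T' : {set 'I_l} | [disjoint T' & T]]
  [set T' : {set 'I_l} | #|T'| == t].
rewrite card_draws card_ord => <-.
have -> : [set T' : {set 'I_l} | #|T'| == t] :&: [set T' : {set 'I_l} | [disjoint T' & T]]
    = [set T' : {set 'I_l} | T' \subset ~: T & #|T'| == t].
  by apply/setP => T'; rewrite !inE disjoints_subset andbC.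
have cardCT : #|~: T| = l - t by rewrite cardsCs setCK card_ord cardT.
rewrite cards_draws cardCT addKn.
by apply: eq_card => T'; rewrite !inE andbC.
Qed.

Section Application.
Variables (F : finFieldType) (n l t m : nat).
Hypotheses (t_gt0 : 0 < t) (le_mt : m <= t).
Local Notation Omega := {ffun 'I_l -> Fqn F n}.
Local Notation tset := {T : {set 'I_l} | #|T| == t}.

Definition zero_sym (i : tset) : {set Omega} :=
  [set w : Omega | elem_sym m (val i) w == 0%R].

Definition meeting (i : tset) : {set tset} :=
  [set j : tset | ~~ [disjoint val j & val i]].

Lemma card_meeting_D1 i : #|meeting i :\ i| = ('C(l, t) - 'C(l - t, t)).-1.
Proof.
have cardi : #|val i| = t by apply/eqP; exact: valP i.
have i_meeting : i \in meeting i.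
  by rewrite inE -setI_eq0 setIid -card_gt0 cardi.
rewrite -(card_meeting_sets cardi).
have -> : [set T' : {set 'I_l} | (#|T'| == t) && ~~ [disjoint T' & val i]]
    = val @: meeting i.
  apply/setP => T'; rewrite inE; apply/andP/imsetP => [[cardT' meetT'] | [j ji ->]].
    by exists (exist _ T' cardT'); rewrite ?inE.
  by rewrite (eqP (valP j)); move: ji; rewrite inE.
by rewrite (card_imset _ val_inj) (cardsD1 i (meeting i)) i_meeting.
Qed.

Lemma card_zero_sym_avoid i (S : {set tset}) : [disjoint S & meeting i] ->
  #|zero_sym i :&: avoid zero_sym S| * #|F| ^ n <= m ^ n * #|avoid zero_sym S|.
Proof.
move=> S_meeting; rewrite setIC.
apply: card_elem_sym_eq0; first by rewrite (eqP (valP i)).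
move=> w w' agree_ww'; rewrite !inE => /forall_inP Sw; apply/forall_inP => j jS.
have := Sw j jS; rewrite !inE (@eq_elem_sym _ _ _ _ w w') // => k k_j.
apply/ffunP => k'; apply/agree_ww'; rewrite in_setT andbT.
by have := disjointFr S_meeting jS; rewrite inE => /negbFE/disjointFr/(_ k_j) ->.
Qed.

Lemma exists_elem_sym_neq0 d a b :
  'C(l, t) - 'C(l - t, t) = d.+1 -> a < b ->
  m ^ n * b ^ d.+1 <= #|F| ^ n * a * (b - a) ^ d ->
  exists w : Omega, forall T : {set 'I_l}, #|T| = t -> elem_sym m T w != 0%R.
Proof.
move=> D_eq a_lt_b lll_cond.
have card_nbr i : #|meeting i :\ i| <= d by rewrite card_meeting_D1 D_eq.
have Q_gt0 : 0 < #|F| ^ n by rewrite expn_gt0 ltnW ?card_finNzRing_gt1.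
have [|w w_ok] := lopsided_local_lemma card_zero_sym_avoid card_nbr Q_gt0 a_lt_b lll_cond.
  by apply/card_gt0P; exists 0%R.
by exists w => T /eqP cardT; have := w_ok (exist _ T cardT); rewrite inE.
Qed.

End Application.

Lemma ltn_bin_sub l t : 0 < t -> t <= l -> 'C(l - t, t) < 'C(l, t).
Proof.
case: t => // t _; case: l => // l le_tl.
by rewrite binS subSS -addn1 leq_add ?leq_bin2l ?leq_subr ?bin_gt0.
Qed.

(* Importing Reals rebinds [^] on nat to [Nat.pow]; nat powers are [expn] below. *)
From Stdlib Require Import Reals Lra.

Lemma INR_expn a k : INR (expn a k) = (INR a ^ k)%R.
Proof. by elim: k => // k IHk; rewrite expnS -multE mult_INR IHk. Qed.

Lemma exp_pow x k : (exp x ^ k = exp (INR k * x))%R.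
Proof.
elim: k => [|k IHk]; first by rewrite Rmult_0_l exp_0.
by rewrite [LHS]/= IHk -exp_plus S_INR; congr exp; ring.
Qed.

Lemma succ_pow_le_exp1 d : (INR d.+1 ^ d <= exp 1 * INR d ^ d)%R.
Proof.
case: d => [|d]; first by have := exp_ineq1_le 1; rewrite /=; lra.
have d_gt0 : (0 < INR d.+1)%R by apply: lt_0_INR; lia.
have -> : INR d.+2 = (INR d.+1 * (1 + / INR d.+1))%R by rewrite S_INR; field; lra.
rewrite Rpow_mult_distr Rmult_comm; apply: Rmult_le_compat_r; first by apply: pow_le; lra.
have -> : exp 1 = (exp (/ INR d.+1) ^ d.+1)%R by rewrite exp_pow Rinv_r; lra.
by apply: pow_incr; split; [have := Rinv_0_lt_compat _ d_gt0; lra | apply: exp_ineq1_le].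
Qed.

(* For d > 0 take x = 1/(d+1); for d = 0 take x = (m/q)^n itself. *)
Lemma lll_parameters m q n d : 0 < q ->
  (exp 1 * INR d.+1 * (INR m / INR q) ^ n <= 1)%R ->
  exists a b, a < b /\ expn m n * expn b d.+1 <= expn q n * a * expn (b - a) d.
Proof.
move=> q_gt0; set P := expn m n; set Q := expn q n.
have Q_gt0 : 0 < Q by rewrite /Q expn_gt0 q_gt0.
have -> : ((INR m / INR q) ^ n = INR P / INR Q)%R.
  by rewrite !INR_expn /Rdiv Rpow_mult_distr pow_inv.
clearbody P Q.
have Q_ge1 : (1 <= INR Q)%R by apply: (le_INR 1); apply/leP.
move=> cond; have {cond} cond : (exp 1 * INR d.+1 * INR P <= INR Q)%R.
  apply: (Rmult_le_reg_r (/ INR Q)); first by apply: Rinv_0_lt_compat; lra.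
  by rewrite Rinv_r; [rewrite Rmult_assoc | lra].
have e_gt2 : (2 < exp 1)%R by have := exp_ineq1 1 R1_neq_R0; lra.
have P_ge0 := pos_INR P.
case: d cond => [|d] cond.
  exists P, Q; split; last by rewrite expn1 expn0 muln1 mulnC.
  by apply/ltP/INR_lt; rewrite /= Rmult_1_r in cond; nra.
exists 1, d.+2; split => //; rewrite subSS subn0 muln1.
apply/leP/INR_le.
rewrite mult_INR (INR_expn d.+2) mult_INR (INR_expn d.+1) -tech_pow_Rmult.
have PD_ge0 : (0 <= INR P * INR d.+2)%R by apply: Rmult_le_pos; apply: pos_INR.
have Y_ge0 : (0 <= INR d.+1 ^ d.+1)%R by apply/pow_le/pos_INR.
have := Rmult_le_compat_l _ _ _ PD_ge0 (succ_pow_le_exp1 d.+1).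
have := Rmult_le_compat_r _ _ _ Y_ge0 cond.
lra.
Qed.

Theorem theorem2p4 (F : finFieldType) (n t m l : nat) :
  (0 < n)%N -> (0 < t)%N -> (0 < m)%N -> (m <= t)%N -> (0 < l)%N ->
  (exp 1 * (INR 'C(l, t) - INR 'C(l - t, t)) * (INR m / INR #|F|) ^ n <= 1)%R ->
  EGZ_gt (Fqn F n) t m l.
Proof.
move=> _ t_gt0 _ le_mt _ egz_cond.
have [lt_l_t | le_tl] := ltnP l t; first exact: EGZ_gt_small.
have lt_bin := ltn_bin_sub t_gt0 le_tl.
have [d D_eq] : exists d, 'C(l, t) - 'C(l - t, t) = d.+1.
  by exists ('C(l, t) - 'C(l - t, t)).-1; rewrite prednK // subn_gt0.
rewrite -minus_INR ?minusE ?D_eq in egz_cond; last exact/leP/ltnW.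
have q_gt0 := ltnW (card_finNzRing_gt1 F).
have [a [b [a_lt_b lll_cond]]] := lll_parameters q_gt0 egz_cond.
have [w w_ok] := exists_elem_sym_neq0 t_gt0 le_mt D_eq a_lt_b lll_cond.
exact: EGZ_gt_of_elem_sym_neq0 w_ok.
Qed.
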